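(* Let $\lambda\in(0,1]$, $S^{\min}\le S^{\max}$, $U^{\min}\le 0\le U^{\max}$ and real numbers $\underline{D}g<\overline{D}g$ be given, with $W^{\max},\Gamma^{\min}(W),\Gamma^{\max}(W)$, $M(\Gamma)$ as in the context. Consider the parameter optimization problem \[ \textbf{(PO)}\quad \text{minimize } M(\Gamma)/W \quad\text{subject to } \Gamma^{\min}(W)\le\Gamma\le\Gamma^{\max}(W),\ 0<W\le W^{\max}, \] over $(\Gamma,W)$, and the semidefinite program \[ \text{minimize } N^{u}+\lambda(1-\lambda)N^{s} \] over $(\Gamma,W,N^u,N^s)$ subject to $\Gamma^{\min}(W)\le\Gamma\le\Gamma^{\max}(W)$, $0<W\le W^{\max}$, and \[ \begin{bmatrix} N^u & U^{\min}+(1-\lambda)\Gamma\\ U^{\min}+(1-\lambda)\Gamma & 2W\end{bmatrix}\succeq0,\quad \begin{bmatrix} N^u & U^{\max}+(1-\lambda)\Gamma\\ U^{\max}+(1-\lambda)\Gamma & 2W\end{bmatrix}\succeq0, \] \[ \begin{bmatrix} N^s & S^{\min}+\Gamma\\ S^{\min}+\Gamma & W\end{bmatrix}\succeq0,\quad \begin{bmatrix} N^s & S^{\max}+\Gamma\\ S^{\max}+\Gamma & W\end{bmatrix}\succeq0. \] Then \textbf{(PO)} can be solved via this semidefinite program: the two problems have the same optimal value, and $(\Gamma,W)$ is optimal for \textbf{(PO)} if and only if there exist $N^u,N^s$ such that $(\Gamma,W,N^u,N^s)$ is optimal for the semidefinite program.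
   Context: Definitions: $W^{\max}=\dfrac{(S^{\max}-S^{\min})-(U^{\max}-U^{\min})}{\overline{D}g-\underline{D}g}$; $\Gamma^{\min}(W)=\frac1\lambda\big(-W\underline{D}g+U^{\max}-S^{\max}\big)$ and $\Gamma^{\max}(W)=\frac1\lambda\big(-W\overline{D}g-S^{\min}+U^{\min}\big)$ (affine in $W$); $M(\Gamma)=M^u(\Gamma)+\lambda(1-\lambda)M^s(\Gamma)$ with $M^{u}(\Gamma)=\tfrac12\max\big((U^{\min}+(1-\lambda)\Gamma)^2,(U^{\max}+(1-\lambda)\Gamma)^2\big)$ and $M^{s}(\Gamma)=\max\big((S^{\min}+\Gamma)^2,(S^{\max}+\Gamma)^2\big)$. In the paper, $M(\Gamma)/W$ is the sub-optimality bound of an online storage control algorithm with shift parameter $\Gamma$ and weight parameter $W$. *)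

From HB Require Import structures.
From mathcomp Require Import all_boot all_order all_algebra.
From mathcomp Require Import all_classical all_reals ereal.
Set Implicit Arguments. Unset Strict Implicit. Unset Printing Implicit Defensive.
Import Order.TTheory GRing.Theory Num.Theory.
Local Open Scope ring_scope.
Local Open Scope classical_set_scope.

Section Defs.
Variable R : realType.
Variables (lam Smin Smax Umin Umax Dl Du : R).
(* Dl = \underline{D}g, Du = \overline{D}g *)

Definition Wmax : R := ((Smax - Smin) - (Umax - Umin)) / (Du - Dl).
Definition Gmin (W : R) : R := (- (W * Dl) + Umax - Smax) / lam.
Definition Gmax (W : R) : R := (- (W * Du) - Smin + Umin) / lam.

Definition Mu (G : R) : R :=
  (Num.max ((Umin + (1 - lam) * G) ^+ 2) ((Umax + (1 - lam) * G) ^+ 2)) / 2.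
Definition Ms (G : R) : R := Num.max ((Smin + G) ^+ 2) ((Smax + G) ^+ 2).
Definition Mbound (G : R) : R := Mu G + lam * (1 - lam) * Ms G.

Definition mx2 (a b d : R) : 'M[R]_2 :=
  \matrix_(i < 2, j < 2)
    if (i == 0 :> nat) then (if (j == 0 :> nat) then a else b)
    else (if (j == 0 :> nat) then b else d).

Definition psd (A : 'M[R]_2) : Prop :=
  A^T = A /\ forall x : 'cV[R]_2, 0 <= (x^T *m A *m x) 0 0.

Definition po_feasible (G W : R) : Prop :=
  Gmin W <= G <= Gmax W /\ 0 < W <= Wmax.

Definition po_obj (G W : R) : R := Mbound G / W.

Definition po_value : \bar R :=
  ereal_inf [set x | exists G W, po_feasible G W /\ x = (po_obj G W)%:E].

Definition po_optimal (G W : R) : Prop :=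
  po_feasible G W /\ forall G' W', po_feasible G' W' -> po_obj G W <= po_obj G' W'.

Definition sdp_feasible (G W Nu Ns : R) : Prop :=
  [/\ Gmin W <= G <= Gmax W /\ 0 < W <= Wmax,
      psd (mx2 Nu (Umin + (1 - lam) * G) (2 * W)),
      psd (mx2 Nu (Umax + (1 - lam) * G) (2 * W)),
      psd (mx2 Ns (Smin + G) W) &
      psd (mx2 Ns (Smax + G) W)].

Definition sdp_obj (Nu Ns : R) : R := Nu + lam * (1 - lam) * Ns.

Definition sdp_value : \bar R :=
  ereal_inf [set x | exists G W Nu Ns, sdp_feasible G W Nu Ns /\ x = (sdp_obj Nu Ns)%:E].

Definition sdp_optimal (G W Nu Ns : R) : Prop :=
  sdp_feasible G W Nu Ns /\
  forall G' W' Nu' Ns', sdp_feasible G' W' Nu' Ns' -> sdp_obj Nu Ns <= sdp_obj Nu' Ns'.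
End Defs.

(** The two linear matrix inequalities on [N^u] say exactly that [N^u] dominates
    both squares divided by [2 W] (a Schur complement for a 2x2 matrix with
    positive corner), hence that [N^u >= M^u(Γ) / W]; likewise the two on [N^s]
    say [N^s >= M^s(Γ) / W].  Since [λ(1-λ) >= 0], every feasible point of the
    semidefinite program costs at least [M(Γ)/W], and the smallest admissible
    [N^u], [N^s] attain this cost.  So the SDP is (PO) with two epigraph
    variables added, which gives both claims. *)
From Pilot Require Import Defs.
From HB Require Import structures.
From mathcomp Require Import all_boot all_order all_algebra.
From mathcomp Require Import all_classical all_reals ereal.
From mathcomp Require Import ring lra.
Import Order.TTheory GRing.Theory Num.Theory.
Local Open Scope ring_scope.

Section Mx2.
Context {R : realType}.

Lemma mx2_qform (a b d : R) (x : 'cV[R]_2) :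
  (x^T *m mx2 a b d *m x) 0 0 =
  a * x 0 0 ^+ 2 + 2 * b * x 0 0 * x 1 0 + d * x 1 0 ^+ 2.
Proof.
rewrite !mxE !big_ord_recl !big_ord0 !mxE !big_ord_recl !big_ord0 !mxE /= /bump /=.
have -> : (lift ord0 ord0 : 'I_2) = 1 by apply/val_inj.
ring.
Qed.

Lemma psd_mx2P (a b d : R) : 0 < d -> psd (mx2 a b d) <-> b ^+ 2 <= a * d.
Proof.
move=> d_gt0; split.
- move=> [_ qform_ge0].
  have := qform_ge0 (\col_i (if i == 0 :> nat then d else - b)).
  rewrite mx2_qform !mxE /= => q_ge0.
  have : 0 <= d * (a * d - b ^+ 2) by move: q_ge0; nra.
  by rewrite pmulr_rge0 // subr_ge0.
- move=> schur; split.
    by apply/matrixP => -[[|[|i]] ?] [[|[|j]] ?]; rewrite !mxE.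
  move=> x; rewrite mx2_qform -(pmulr_rge0 _ d_gt0).
  set u := x 0 0; set v := x 1 0.
  have -> : d * (a * u ^+ 2 + 2 * b * u * v + d * v ^+ 2) =
            (d * v + b * u) ^+ 2 + (a * d - b ^+ 2) * u ^+ 2 by ring.
  by rewrite addr_ge0 ?sqr_ge0 // mulr_ge0 ?sqr_ge0 // subr_ge0.
Qed.

Lemma psd_mx2_maxP {a b1 b2 d : R} : 0 < d ->
  psd (mx2 a b1 d) /\ psd (mx2 a b2 d) <-> Num.max (b1 ^+ 2) (b2 ^+ 2) / d <= a.
Proof.
move=> d_gt0; rewrite ler_pdivrMr // ge_max !psd_mx2P //.
by split=> [[-> ->] | /andP[]].
Qed.

End Mx2.

Section Reformulation.
Variables (R : realType) (lam Smin Smax Umin Umax Dl Du : R).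
Hypotheses (lam_ge0 : 0 <= lam) (lam_le1 : lam <= 1).

Local Notation po_feasible := (po_feasible lam Smin Smax Umin Umax Dl Du).
Local Notation po_obj := (po_obj lam Smin Smax Umin Umax).
Local Notation sdp_feasible := (sdp_feasible lam Smin Smax Umin Umax Dl Du).
Local Notation sdp_obj := (sdp_obj lam).
Local Notation Mu := (Mu lam Umin Umax).
Local Notation Ms := (Ms Smin Smax).

Lemma sdp_feasibleP G W Nu Ns :
  sdp_feasible G W Nu Ns <->
  [/\ po_feasible G W, Mu G / W <= Nu & Ms G / W <= Ns].
Proof.
have Mu_le : (Mu G / W <= Nu) =
    (Num.max ((Umin + (1 - lam) * G) ^+ 2) ((Umax + (1 - lam) * G) ^+ 2)
       / (2 * W) <= Nu).
  by rewrite /Defs.Mu invfM -mulrA.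
split.
- case=> -[G_range /andP[W_gt0 W_le]] PUmin PUmax PSmin PSmax.
  have W2_gt0 : 0 < 2 * W by rewrite mulr_gt0.
  split; first by split=> //; apply/andP.
  + by rewrite Mu_le; apply/psd_mx2_maxP.
  + exact/psd_mx2_maxP.
- case=> -[G_range /andP[W_gt0 W_le]].
  have W2_gt0 : 0 < 2 * W by rewrite mulr_gt0.
  rewrite Mu_le => /(psd_mx2_maxP W2_gt0)[PUmin PUmax].
  move=> /(psd_mx2_maxP W_gt0)[PSmin PSmax].
  by split=> //; split=> //; apply/andP.
Qed.

Lemma po_obj_le_sdp_obj {G W Nu Ns} :
  sdp_feasible G W Nu Ns -> po_obj G W <= sdp_obj Nu Ns.
Proof.
case/sdp_feasibleP=> _ Mu_le Ms_le.
rewrite /Defs.po_obj /Defs.sdp_obj /Mbound mulrDl -mulrA.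
by rewrite lerD // ler_wpM2l // mulr_ge0 // subr_ge0.
Qed.

Lemma sdp_feasible_epigraph {G W} :
  po_feasible G W -> sdp_feasible G W (Mu G / W) (Ms G / W).
Proof. by move=> feas; apply/sdp_feasibleP. Qed.

Lemma sdp_obj_epigraph G W : sdp_obj (Mu G / W) (Ms G / W) = po_obj G W.
Proof. by rewrite /Defs.po_obj /Defs.sdp_obj /Mbound; ring. Qed.

Lemma po_value_eq_sdp_value :
  po_value lam Smin Smax Umin Umax Dl Du = sdp_value lam Smin Smax Umin Umax Dl Du.
Proof.
apply/le_anti/andP; split; apply/ereal_infP.
- move=> _ [G [W [Nu [Ns [feas ->]]]]].
  apply: ge_ereal_inf; exists (po_obj G W)%:E; last by rewrite lee_fin po_obj_le_sdp_obj.
  by exists G, W; split=> //; case/sdp_feasibleP: feas.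
- move=> _ [G [W [feas ->]]].
  apply: ge_ereal_inf; exists (po_obj G W)%:E => //.
  exists G, W, (Mu G / W), (Ms G / W).
  by rewrite sdp_obj_epigraph; split=> //; apply: sdp_feasible_epigraph.
Qed.

Lemma po_optimal_sdp_optimal G W :
  po_optimal lam Smin Smax Umin Umax Dl Du G W <->
  exists Nu Ns, sdp_optimal lam Smin Smax Umin Umax Dl Du G W Nu Ns.
Proof.
split.
- move=> [feas opt]; exists (Mu G / W), (Ms G / W).
  split; first exact: sdp_feasible_epigraph.
  move=> G' W' Nu' Ns' feas'; rewrite sdp_obj_epigraph.
  apply: le_trans (po_obj_le_sdp_obj feas'); apply: opt.
  by case/sdp_feasibleP: feas'.
- move=> [Nu [Ns [feas opt]]]; split; first by case/sdp_feasibleP: feas.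
  move=> G' W' feas'; rewrite -(sdp_obj_epigraph G' W').
  apply: le_trans (opt _ _ _ _ (sdp_feasible_epigraph feas')).
  exact: po_obj_le_sdp_obj feas.
Qed.

End Reformulation.

Theorem lemma1 (R : realType) (lam Smin Smax Umin Umax Dl Du : R) :
  0 < lam <= 1 -> Smin <= Smax -> Umin <= 0 <= Umax -> Dl < Du ->
  po_value lam Smin Smax Umin Umax Dl Du = sdp_value lam Smin Smax Umin Umax Dl Du /\
  (forall G W : R,
     po_optimal lam Smin Smax Umin Umax Dl Du G W <->
     exists Nu Ns : R, sdp_optimal lam Smin Smax Umin Umax Dl Du G W Nu Ns).
Proof.
move=> /andP[lam_gt0 lam_le1] _ _ _.
have lam_ge0 := ltW lam_gt0.
split; [exact: po_value_eq_sdp_value | exact: po_optimal_sdp_optimal].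
Qed.
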